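(* Let $X$, $Y_k$ ($k\in\mathbb N$) and norms $\|\cdot\|_{X\oplus Y_k}$ be as in the generalized $\ell^2$-sum setting. If $x^*\in X^*$ and $y_k^*\in Y_k^*$ ($k\in\mathbb N$) satisfy $\sup_k\|x^*+y_k^*\|_{X\oplus Y_k}<\infty$, and $0\le\alpha_k\le1$ ($k\in\mathbb N$) satisfy $\sum_k\alpha_k^2\le1$, then $$\Big\|x^*+\sum_k\alpha_ky_k^*\Big\|_\Sigma\le\sup_k\|x^*+y_k^*\|_{X\oplus Y_k}.$$
   Context: Setting: $(X,\|\cdot\|_X)$ and $(Y_k,\|\cdot\|_{Y_k})$, $k\in\mathbb N$, are Banach spaces; for each $k$, $\|\cdot\|_{X\oplus Y_k}$ is a norm on $X\oplus Y_k$ coinciding with $\|\cdot\|_X$ on $X$ and with $\|\cdot\|_{Y_k}$ on $Y_k$, and monotone: $\|x+y_k\|_{X\oplus Y_k}\ge\|x\|_X$. Duals of direct sums are identified with direct sums of duals via $(x^*+y^* )(x+y)=x^*(x)+y^*(y)$. $\Lambda(X\oplus Y_k)$ is the set of functionals $x^*+\sum_k\alpha_ky_k^*$ (acting by $x+\sum y_k\mapsto x^*(x)+\sum\alpha_ky_k^*(y_k)$) with $x^*\in X^*$, $y_k^*\in Y_k^*$, $\|x^*+y_k^*\|_{X\oplus Y_k}\le1$ for all $k$, $0\le\alpha_k\le1$, $\sum\alpha_k^2\le1$. $\Sigma(X\oplus Y_k)=\{x+y_1+y_2+\dots:x\in X,y_k\in Y_k,\sum\|y_k\|_{Y_k}^2<\infty\}$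 with $\|z\|_\Sigma=\sup\{|z^*(z)|:z^*\in\Lambda(X\oplus Y_k)\}$; the dual norm is also denoted $\|\cdot\|_\Sigma$. *)

From HB Require Import structures.
From mathcomp Require Import all_boot all_order all_algebra.
From mathcomp Require Import all_classical all_reals all_analysis.
Set Implicit Arguments. Unset Strict Implicit. Unset Printing Implicit Defensive.
Import Order.TTheory GRing.Theory Num.Theory numFieldNormedType.Exports.
Local Open Scope classical_set_scope.
Local Open Scope ring_scope.

(* Conventions:
   - an element x + y of X (+) Y_k is represented as the pair (x, y);
   - a norm on X (+) Y_k is a function N : X -> Y k -> R (see is_sum_norm);
   - a continuous linear functional on V is a record [dual V];
   - x^* + y^* acts on (x, y) as x^*(x) + y^*(y). *)

Record dual (R : realType) (V : normedModType R) := Dual {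
  dfun :> V -> R ;
  dfun_lin : forall (a : R) (u v : V), dfun (a *: u + v) = a * dfun u + dfun v ;
  dfun_cont : continuous dfun }.

Definition is_sum_norm (R : realType) (X Y : normedModType R)
    (N : X -> Y -> R) : Prop :=
  [/\ forall x1 x2 y1 y2, N (x1 + x2) (y1 + y2) <= N x1 y1 + N x2 y2,
      forall (a : R) x y, N (a *: x) (a *: y) = `|a| * N x y,
      forall x y, N x y = 0 -> x = 0 /\ y = 0,
      forall x, N x 0 = `|x| &
      (forall y, N 0 y = `|y|) /\
      (forall x y, `|x| <= N x y)].

Definition sum_dual_norm (R : realType) (X Y : normedModType R)
    (N : X -> Y -> R) (xs : dual X) (ys : dual Y) : \bar R :=
  ereal_sup [set r : \bar R | exists (x : X) (y : Y),
                  N x y <= 1 /\ r = (`| xs x + ys y |)%:E].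

Definition lam_apply (R : realType) (X : normedModType R)
    (Y : nat -> normedModType R) (xs : dual X) (ys : forall k, dual (Y k))
    (alpha : nat -> R) (x : X) (y : forall k, Y k) : R :=
  xs x + limn (fun n => \sum_(0 <= k < n) alpha k * ys k (y k)).

Definition in_Sigma (R : realType) (Y : nat -> normedModType R)
    (y : forall k, Y k) : Prop :=
  (\sum_(0 <= k <oo) ((`| y k | ^+ 2)%:E) < +oo)%E.

Definition in_Lambda (R : realType) (X : normedModType R)
    (Y : nat -> normedModType R) (N : forall k, X -> Y k -> R)
    (xs : dual X) (ys : forall k, dual (Y k)) (alpha : nat -> R) : Prop :=
  [/\ forall k, (sum_dual_norm (N k) xs (ys k) <= 1)%E,
      forall k, 0 <= alpha k <= 1 &
      (\sum_(0 <= k <oo) ((alpha k ^+ 2)%:E) <= 1)%E].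

Definition Sigma_norm (R : realType) (X : normedModType R)
    (Y : nat -> normedModType R) (N : forall k, X -> Y k -> R)
    (x : X) (y : forall k, Y k) : \bar R :=
  ereal_sup [set r : \bar R | exists (xs : dual X) (ys : forall k, dual (Y k))
                 (alpha : nat -> R), in_Lambda N xs ys alpha /\
                 r = (`| lam_apply xs ys alpha x y |)%:E].

Definition Sigma_dual_norm (R : realType) (X : normedModType R)
    (Y : nat -> normedModType R) (N : forall k, X -> Y k -> R)
    (xs : dual X) (ys : forall k, dual (Y k)) (alpha : nat -> R) : \bar R :=
  ereal_sup [set r : \bar R | exists (x : X) (y : forall k, Y k),
                 [/\ in_Sigma y, (Sigma_norm N x y <= 1)%E &
                     r = (`| lam_apply xs ys alpha x y |)%:E]].

From HB Require Import structures.
From mathcomp Require Import all_boot all_order all_algebra.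
From mathcomp Require Import all_classical all_reals all_analysis.
Set Implicit Arguments. Unset Strict Implicit. Unset Printing Implicit Defensive.
Import Order.TTheory GRing.Theory Num.Theory numFieldNormedType.Exports.
Local Open Scope classical_set_scope.
Local Open Scope ring_scope.

(* If every ||x^* + y_k^*||_{X (+) Y_k} is at most M, then for each c > M the
   triple (x^*/c, y_k^*/c, alpha_k) lies in Lambda, so its value on any z with
   ||z||_Sigma <= 1 is at most 1.  Hence x^* + sum_k alpha_k y_k^* takes
   values of modulus at most c on the Sigma unit ball, and letting c decrease
   to M gives the bound. *)

Section DualFunctional.
Variables (R : realType) (V : normedModType R).

Lemma dual0 (f : dual V) : f 0 = 0.
Proof.
have := dfun_lin f 1 0 0; rewrite scaler0 addr0 mul1r => f0.
by apply: (addrI (f 0)); rewrite addr0 -f0.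
Qed.

Lemma dscale_lin (c : R) (f : dual V) a u v :
  c * f (a *: u + v) = a * (c * f u) + c * f v.
Proof. by rewrite dfun_lin mulrDr mulrCA. Qed.

Lemma dscale_cont (c : R) (f : dual V) : continuous (fun v => c * f v).
Proof. by move=> v; apply: continuousM; [exact: cst_continuous | exact: dfun_cont]. Qed.

Definition dscale (c : R) (f : dual V) : dual V :=
  Dual (@dscale_lin c f) (@dscale_cont c f).

End DualFunctional.

(* Holds even for divergent [u], where [limn] returns the junk value 0. *)
Lemma limn_mull (R : realType) (c : R) (u : nat -> R) :
  limn (fun n => c * u n) = c * limn u.
Proof.
have [->|cnz] := eqVneq c 0.
  by rewrite mul0r; under eq_fun do rewrite mul0r; exact: lim_cst.
have [cu|du] := pselect (cvgn u); first exact: limZl_tmp.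
have dcu : ~ cvgn (fun n => c * u n).
  by move=> cu; apply: du; rewrite -(is_cvgZlE _ cnz).
by rewrite (dvgP du) (dvgP dcu) mulr0.
Qed.

Section SumDualNorm.
Variables (R : realType) (X Y : normedModType R) (N : X -> Y -> R).

Lemma sum_dual_norm_ge0 (xs : dual X) (ys : dual Y) :
  is_sum_norm N -> (0 <= sum_dual_norm N xs ys)%E.
Proof.
case=> _ _ _ Nx0 _; apply: ereal_sup_ubound; exists 0, 0.
by rewrite Nx0 !dual0 addr0 !normr0.
Qed.

Lemma sum_dual_norm_dscale (xs : dual X) (ys : dual Y) (c M : R) : 0 <= c ->
  (sum_dual_norm N xs ys <= M%:E)%E ->
  (sum_dual_norm N (dscale c xs) (dscale c ys) <= (c * M)%:E)%E.
Proof.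
move=> c0 leM; apply: ge_ereal_sup => _ [x [y [Nxy ->]]].
rewrite lee_fin /= -mulrDr normrM ger0_norm // ler_wpM2l // -lee_fin.
by apply: le_trans leM; apply: ereal_sup_ubound; exists x, y.
Qed.

End SumDualNorm.

Section Sigma.
Variables (R : realType) (X : normedModType R) (Y : nat -> normedModType R).

Lemma lam_apply_dscale (xs : dual X) (ys : forall k, dual (Y k)) alpha c x y :
  lam_apply (dscale c xs) (fun k => dscale c (ys k)) alpha x y =
  c * lam_apply xs ys alpha x y.
Proof.
rewrite /lam_apply mulrDr -limn_mull; congr (_ + limn _).
by apply: funext => n; rewrite big_distrr; apply: eq_bigr => k _; rewrite mulrCA.
Qed.

Lemma lam_apply_le_Sigma_norm (N : forall k, X -> Y k -> R)
    (xs : dual X) (ys : forall k, dual (Y k)) alpha x y :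
  in_Lambda N xs ys alpha ->
  (`|lam_apply xs ys alpha x y|%:E <= Sigma_norm N x y)%E.
Proof. by move=> inL; apply: ereal_sup_ubound; exists xs, ys, alpha. Qed.

Lemma lam_apply_le (N : forall k, X -> Y k -> R)
    (xs : dual X) (ys : forall k, dual (Y k)) alpha (M : R) x y :
  0 <= M -> (forall k, (sum_dual_norm (N k) xs (ys k) <= M%:E)%E) ->
  (forall k, 0 <= alpha k <= 1) ->
  (\sum_(0 <= k <oo) ((alpha k ^+ 2)%:E) <= 1)%E ->
  (Sigma_norm N x y <= 1)%E ->
  `|lam_apply xs ys alpha x y| <= M.
Proof.
move=> M0 leM alpha01 alpha2 Sxy1; apply/ler_addgt0Pr => e e0.
have c0 : 0 < M + e by rewrite ltr_wpDl.
have inL :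
    in_Lambda N (dscale (M + e)^-1 xs) (fun k => dscale (M + e)^-1 (ys k)) alpha.
  split=> // k.
  have cinv0 : 0 <= (M + e)^-1 by rewrite invr_ge0 ltW.
  apply: le_trans (sum_dual_norm_dscale cinv0 (leM k)) _.
  by rewrite lee_fin ler_pdivrMl // mulr1 lerDl ltW.
have := le_trans (lam_apply_le_Sigma_norm x y inL) Sxy1.
rewrite lee_fin lam_apply_dscale normrM ger0_norm; last by rewrite invr_ge0 ltW.
by rewrite ler_pdivrMl // mulr1.
Qed.

End Sigma.

Theorem lemma3p3 (R : realType) (X : completeNormedModType R)
    (Y : nat -> completeNormedModType R) (N : forall k, X -> Y k -> R)
    (hN : forall k, is_sum_norm (N k))
    (xs : dual X) (ys : forall k, dual (Y k)) (alpha : nat -> R)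
    (hsup : (ereal_sup (range (fun k => sum_dual_norm (N k) xs (ys k))) < +oo)%E)
    (halpha : forall k, 0 <= alpha k <= 1)
    (halpha2 : (\sum_(0 <= k <oo) ((alpha k ^+ 2)%:E) <= 1)%E) :
  (Sigma_dual_norm N xs ys alpha <=
     ereal_sup (range (fun k => sum_dual_norm (N k) xs (ys k))))%E.
Proof.
set S := ereal_sup _ in hsup *.
have leS k : (sum_dual_norm (N k) xs (ys k) <= S)%E.
  by apply: ereal_sup_ubound; exists k.
have S0 : (0 <= S)%E := le_trans (sum_dual_norm_ge0 xs (ys 0%N) (hN 0%N)) (leS 0%N).
have SE : S = (fine S)%:E by rewrite fineK // ge0_fin_numE.
apply: ge_ereal_sup => _ [x [y [_ Sxy1 ->]]].
rewrite SE lee_fin; apply: lam_apply_le halpha halpha2 Sxy1.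
  by rewrite -lee_fin -SE.
by move=> k; rewrite -SE.
Qed.
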